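(* Let $\lambda,\mu$ be strict partitions with $\mu\subseteq\lambda$ such that the shifted skew diagram $\widetilde{\lambda/\mu}$ has $n$ boxes and contains the three boxes $(i,j)$, $(i,j+1)$ and $(i+1,j+1)$ for some $i,j$. Write $Q_{\lambda/\mu}=\sum_{\nu\in OP(n)}a_\nu p_\nu$. Then $\sum_{\nu\in OP(n)}a_\nu=0$.
   Context: For strict partitions $\mu\subseteq\lambda$, the shifted skew diagram $\widetilde{\lambda/\mu}$ is the set of boxes $(r,c)$ with $1\le r\le\ell(\lambda)$ and $r+\mu_r\le c\le r+\lambda_r-1$ (with $\mu_r=0$ for $r>\ell(\mu)$); $(r,c)$ means row $r$ (rows numbered top to bottom) and column $c$. Let $\mathbf{P}'=\{1'<1<2'<2<\cdots\}$; $|a|$ denotes the unmarked version of $a$. A marked shifted tableau of shape $\widetilde{\lambda/\mu}$ is a filling of its boxes by letters of $\mathbf{P}'$ such that rows and columns weakly increase, each column contains at most one unmarked $k$ and each row at most one marked $k'$ for each $k$. Its content is $(c_1,c_2,\dots)$ with $c_i$ the number of entries $a$ with $|a|=i$. The skew Schur $Q$-function is $Q_{\lambda/\mu}=\sum_T x^{c(T)}$ over all such tableaux; it lies in $\Gamma=\mathbb{Q}[p_1,p_3,\dots]$ and so expands in $\{p_\nu:\nu\in OP(n)\}$, $OP(n)$ being the partitions of $n$ into odd parts. *)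

From HB Require Import structures.
From mathcomp Require Import all_boot all_order all_algebra.
Set Implicit Arguments. Unset Strict Implicit. Unset Printing Implicit Defensive.
Import Order.TTheory GRing.Theory Num.Theory.

Definition strict_partition (l : seq nat) : bool :=
  sorted gtn l && all (fun x => 0 < x) l.

Definition subpart (mu lam : seq nat) : bool :=
  (size mu <= size lam) && all (fun r => nth 0 mu r <= nth 0 lam r) (iota 0 (size lam)).

(* Boxes (r,c) of the shifted skew diagram, rows r = 1..l(lam),
   columns r + mu_r <= c <= r + lam_r - 1 (mu_r = 0 for r > l(mu)). *)
Definition sbox (lam mu : seq nat) : seq (nat * nat) :=
  flatten [seq [seq (r, c) | c <- iota (r + nth 0 mu r.-1) (nth 0 lam r.-1 - nth 0 mu r.-1)]
          | r <- iota 1 (size lam)].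

(* Marked letters: (k, b) with k : 'I_L stands for the letter k+1 if b = false
   (unmarked) and (k+1)' if b = true (marked).  Total order of P':
   1' < 1 < 2' < 2 < ..., encoded by the following rank. *)
Definition lrank L (a : 'I_L * bool) : nat := (2 * a.1 + ~~ a.2)%N.

Definition is_mst (lam mu : seq nat) L
    (T : {ffun 'I_(size (sbox lam mu)) -> 'I_L * bool}) : bool :=
  [forall p : 'I_(size (sbox lam mu)), forall q : 'I_(size (sbox lam mu)),
     let bp := nth (0, 0)%N (sbox lam mu) p in
     let bq := nth (0, 0)%N (sbox lam mu) q in
     [&& ((bp.1 == bq.1) && (bp.2 < bq.2)) ==> (lrank (T p) <= lrank (T q)),
         ((bp.2 == bq.2) && (bp.1 < bq.1)) ==> (lrank (T p) <= lrank (T q)),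
         ((p != q) && (bp.2 == bq.2)) ==> ~~ ((T p == T q) && ~~ (T p).2) &
         ((p != q) && (bp.1 == bq.1)) ==> ~~ ((T p == T q) && (T p).2)]].

(* Coefficient of x_1^{c_1} ... x_L^{c_L} (L = size c) in Q_{lam/mu}:
   the number of marked shifted tableaux of shape lam/mu with content c. *)
Definition Qcoef (lam mu : seq nat) (c : seq nat) : nat :=
  #|[set T : {ffun 'I_(size (sbox lam mu)) -> 'I_(size c) * bool} |
      is_mst T && [forall k : 'I_(size c), #|[pred p | (T p).1 == k]| == nth 0 c k]]|.

(* Coefficient of x_1^{c_1} ... x_L^{c_L} in p_nu = prod_i p_{nu_i}:
   number of maps f from parts of nu to variables with sum_{f i = k} nu_i = c_k. *)
Definition pcoef (nu : seq nat) (c : seq nat) : nat :=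
  #|[set f : {ffun 'I_(size nu) -> 'I_(size c)} |
      [forall k : 'I_(size c), (\sum_(i | f i == k) nth 0 nu i)%N == nth 0 c k]]|.

Definition is_OP (n : nat) (nu : seq nat) : bool :=
  sorted geq nu && all odd nu && (sumn nu == n).

Fixpoint allseqs (len bound : nat) : seq (seq nat) :=
  if len is l.+1 then
    [::] :: [seq x :: s | x <- iota 1 bound, s <- allseqs l bound]
  else [:: [::]].

Definition OP (n : nat) : seq (seq nat) := undup [seq nu <- allseqs n n | is_OP n nu].

From HB Require Import structures.
From mathcomp Require Import all_boot all_order all_algebra.
Import Order.TTheory GRing.Theory Num.Theory.
Set Implicit Arguments. Unset Strict Implicit.
Local Open Scope ring_scope.

(* The sum of the coefficients a_nu of Q_{lam/mu} = sum_nu a_nu p_nu is the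
   value of Q_{lam/mu} at x = (1, 0, 0, ...), i.e. the coefficient of x_1^n.
   Indeed every p_nu with nu in OP(n) has coefficient 1 on x_1^n (all parts of
   nu go to the single variable x_1).  On the other side, a marked shifted
   tableau of content (n) is filled with the letters 1' and 1 only, and such a
   filling cannot contain the configuration (i,j), (i,j+1), (i+1,j+1):
   (i,j+1) cannot be 1' (a row holds at most one 1' and rows weakly increase),
   so it is 1, forcing (i+1,j+1) = 1 below it in the same column, which is
   forbidden. *)

Lemma pcoef_single_var (nu : seq nat) : pcoef nu [:: sumn nu] = 1%N.
Proof.
rewrite /pcoef (_ : [set f | _] = setT).
  by rewrite cardsT card_ffun !card_ord exp1n.
apply/setP => f; rewrite !inE; apply/forallP => k /=.
rewrite (ord1 k) /= (eq_bigl xpredT) => [|i]; last by rewrite !ord1.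
by rewrite sumnE (big_nth 0%N) big_mkord.
Qed.

Lemma OP_sumn (n : nat) (nu : seq nat) : nu \in OP n -> sumn nu = n.
Proof. by rewrite mem_undup mem_filter => /andP[/andP[_ /eqP]]. Qed.

Section MarkedShiftedTableauAxioms.

Variables (lam mu : seq nat) (L : nat).
Variable T : {ffun 'I_(size (sbox lam mu)) -> 'I_L * bool}.
Hypothesis mstT : is_mst T.

Local Notation box p := (nth (0, 0)%N (sbox lam mu) p).

Lemma mst_row_le (p q : 'I_(size (sbox lam mu))) :
  (box p).1 = (box q).1 -> ((box p).2 < (box q).2)%N ->
  (lrank (T p) <= lrank (T q))%N.
Proof.
move=> eq_row lt_col; have /and4P[+ _ _ _] := forallP (forallP mstT p) q.
by rewrite eq_row eqxx lt_col => /implyP->.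
Qed.

Lemma mst_col_le (p q : 'I_(size (sbox lam mu))) :
  (box p).2 = (box q).2 -> ((box p).1 < (box q).1)%N ->
  (lrank (T p) <= lrank (T q))%N.
Proof.
move=> eq_col lt_row; have /and4P[_ + _ _] := forallP (forallP mstT p) q.
by rewrite eq_col eqxx lt_row => /implyP->.
Qed.

Lemma mst_col_unmarked (p q : 'I_(size (sbox lam mu))) :
  p != q -> (box p).2 = (box q).2 -> T p = T q -> (T p).2.
Proof.
move=> neq_pq eq_col eq_T; have /and4P[_ _ + _] := forallP (forallP mstT p) q.
by rewrite neq_pq eq_col eq_T !eqxx /= negbK.
Qed.

Lemma mst_row_marked (p q : 'I_(size (sbox lam mu))) :
  p != q -> (box p).1 = (box q).1 -> T p = T q -> ~~ (T p).2.
Proof.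
move=> neq_pq eq_row eq_T; have /and4P[_ _ _ +] := forallP (forallP mstT p) q.
by rewrite neq_pq eq_row eq_T !eqxx.
Qed.

End MarkedShiftedTableauAxioms.

Lemma sbox_position (lam mu : seq nat) (b : nat * nat) :
  b \in sbox lam mu ->
  exists p : 'I_(size (sbox lam mu)), nth (0, 0)%N (sbox lam mu) p = b.
Proof. by rewrite -index_mem => ib; exists (Ordinal ib); rewrite nth_index // -index_mem. Qed.

Lemma single_letter_eq (x y : 'I_1 * bool) : (x == y) = (x.2 == y.2).
Proof. by case: x y => [k b] [k' b']; rewrite (ord1 k) (ord1 k') xpair_eqE eqxx. Qed.

Lemma single_letter_rank (x : 'I_1 * bool) : lrank x = ~~ x.2.
Proof. by case: x => k b; rewrite (ord1 k). Qed.

Lemma no_single_letter_mst (lam mu : seq nat) (i j : nat)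
    (T : {ffun 'I_(size (sbox lam mu)) -> 'I_1 * bool}) :
  (i, j) \in sbox lam mu -> (i, j.+1) \in sbox lam mu ->
  (i.+1, j.+1) \in sbox lam mu -> ~~ is_mst T.
Proof.
move=> /sbox_position[pA eA] /sbox_position[pB eB] /sbox_position[pC eC].
have nAB : pA != pB by apply/eqP => AB; move: eB; rewrite -AB eA => -[] /n_Sn.
have nBC : pB != pC by apply/eqP => BC; move: eC; rewrite -BC eB => -[] /n_Sn.
have rowAB : (nth (0, 0)%N (sbox lam mu) pA).1 = (nth (0, 0)%N (sbox lam mu) pB).1.
  by rewrite eA eB.
have colBC : (nth (0, 0)%N (sbox lam mu) pB).2 = (nth (0, 0)%N (sbox lam mu) pC).2.
  by rewrite eB eC.
apply/negP => mstT.
have leAB : (lrank (T pA) <= lrank (T pB))%N.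
  by apply: (mst_row_le mstT rowAB); rewrite eA eB.
have leBC : (lrank (T pB) <= lrank (T pC))%N.
  by apply: (mst_col_le mstT colBC); rewrite eB eC.
have B_unmarked : ~~ (T pB).2.
  apply/negP => B_marked; move: leAB; rewrite !single_letter_rank B_marked.
  case A_marked: (T pA).2 => //= _.
  have eqAB : T pA = T pB by apply/eqP; rewrite single_letter_eq A_marked B_marked.
  by move: (mst_row_marked mstT nAB rowAB eqAB); rewrite A_marked.
have eqBC : T pB = T pC.
  apply/eqP; rewrite single_letter_eq (negbTE B_unmarked).
  by move: leBC; rewrite !single_letter_rank (negbTE B_unmarked); case: (T pC).2.
by move: (mst_col_unmarked mstT nBC colBC eqBC); rewrite (negbTE B_unmarked).
Qed.

Lemma Qcoef_single_var (lam mu : seq nat) (i j n : nat) :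
  (i, j) \in sbox lam mu -> (i, j.+1) \in sbox lam mu ->
  (i.+1, j.+1) \in sbox lam mu -> Qcoef lam mu [:: n] = 0%N.
Proof.
move=> inA inB inC; rewrite /Qcoef (_ : [set T | _] = set0) ?cards0 //.
by apply/setP => T; rewrite !inE (negbTE (no_single_letter_mst T inA inB inC)).
Qed.

Theorem mainTheorem7 (lam mu : seq nat) (n : nat) (a : seq nat -> rat) :
  strict_partition lam -> strict_partition mu -> subpart mu lam ->
  size (sbox lam mu) = n ->
  (exists i j : nat, [/\ (i, j) \in sbox lam mu, (i, j.+1) \in sbox lam mu
                       & (i.+1, j.+1) \in sbox lam mu]) ->
  (forall c : seq nat,
     (Qcoef lam mu c)%:R = \sum_(nu <- OP n) a nu * (pcoef nu c)%:R) ->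
  \sum_(nu <- OP n) a nu = 0.
Proof.
move=> _ _ _ _ [i [j [inA inB inC]]] /(_ [:: n]) coef_x1n.
transitivity (\sum_(nu <- OP n) a nu * (pcoef nu [:: n])%:R).
  rewrite big_seq_cond [RHS]big_seq_cond; apply: eq_bigr => nu /andP[nu_OP _].
  by rewrite -(OP_sumn nu_OP) pcoef_single_var mulr1.
by rewrite -coef_x1n (Qcoef_single_var n inA inB inC).
Qed.
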